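(* Let $1\le i\le n-2$, $\pi_1\in\mathfrak S_i(1243,2143,321)$ and $\pi_2\in\mathfrak S_{n-i}(1243,2143,321)$. Then $\pi_1*\pi_2\in\mathfrak S_n(1243,2143,321)$ if and only if all of the following hold: (i) at least one of $\pi_1,\pi_2$ has first entry $1$; (ii) the entries $2,3,\dots,i$ appear in increasing order in $\pi_1$; (iii) the entries $\pi_2(2),\pi_2(3),\dots,\pi_2(n-i)$ are increasing.
   Context: $\mathfrak S_m(R)$ is the set of permutations of $\{1,\dots,m\}$ avoiding every pattern in $R$ (no subsequence with the same relative order as a pattern). For nonempty permutations $\pi_1,\pi_2$: let $\tilde\pi_1$ be obtained by adding $|\pi_2|-1$ to every entry of $\pi_1$ and then replacing the entry equal to $|\pi_2|$ by the first entry of $\pi_2$; let $\tilde\pi_2$ be $\pi_2$ with its first entry deleted; then $\pi_1*\pi_2=\tilde\pi_1,\ N,\ \tilde\pi_2$ (concatenation) where $N=|\pi_1|+|\pi_2|$. E.g. $3124*15342=716895342$. *)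

(* permutations of {1..m} as sequences of nat (one-line notation). *)
From mathcomp Require Import all_boot.
Set Implicit Arguments. Unset Strict Implicit. Unset Printing Implicit Defensive.

Definition is_perm (m : nat) (p : seq nat) : bool := perm_eq p (iota 1 m).

Definition contains (p q : seq nat) : Prop :=
  exists s : seq nat, [/\ subseq s p, size s = size q &
    forall a b, a < size q -> b < size q -> (nth 0 s a < nth 0 s b) = (nth 0 q a < nth 0 q b)].

Definition avoids (p q : seq nat) : Prop := ~ contains p q.

Definition inS (m : nat) (R : seq (seq nat)) (p : seq nat) : Prop :=
  is_perm m p /\ forall q, q \in R -> avoids p q.

Definition R3 : seq (seq nat) := [:: [:: 1; 2; 4; 3]; [:: 2; 1; 4; 3]; [:: 3; 2; 1]].

Definition star (p1 p2 : seq nat) : seq nat :=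
  let k := size p2 in
  let t1 := map (fun x => if x + (k - 1) == k then head 0 p2 else x + (k - 1)) p1 in
  t1 ++ (size p1 + size p2) :: behead p2.

From mathcomp Require Import all_boot zify.

Set Implicit Arguments.
Unset Strict Implicit.
Unset Printing Implicit Defensive.

(* Write k = n - i and c for the first entry of pi2. In pi1 * pi2 the first
   block consists of c (the image of the entry 1 of pi1) and entries larger
   than k; then comes the maximum N, followed by the tail of pi2, whose entries
   are at most k. Under (i)-(iii) the large entries and the tail are increasing
   and c comes first or lies below the whole tail, so every descent goes from
   a large entry to a later small one or from c into the tail: this leaves no
   room for 321, 1243 or 2143. Conversely, if a condition fails, a 321 is
   formed by N and a descent of the tail, or by two large entries in the wrong
   order followed by pi2(2), or by a large first entry, c and the entry 1 of
   pi2. *)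

Lemma path_ltn0_map_succn (idx : seq nat) : sorted ltn idx -> path ltn 0 (map succn idx).
Proof. by case: idx => //= j idx; rewrite path_map. Qed.

Lemma subseq_nth_sorted (s p : seq nat) : subseq s p ->
  exists idx, [/\ sorted ltn idx, all (fun j => j < size p) idx & s = map (nth 0 p) idx].
Proof.
elim: p s => [|x p IH] [|y s] //=; try by exists [::].
have all_succ idx : all (fun j => j < size p) idx -> all (fun j => j < (size p).+1) (map succn idx).
  by rewrite all_map; apply: sub_all.
case: eqP => [->|_] /IH [idx [sorted_idx lt_idx ->]].
- exists (0 :: map succn idx); split; rewrite /= -?map_comp //.
  + exact: path_ltn0_map_succn.
  + exact: all_succ.
- exists (map succn idx); split; rewrite -?map_comp //; last exact: all_succ.
  by rewrite sorted_map.
Qed.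

Lemma path_nth_subseq (p idx : seq nat) m : path ltn m idx ->
  all (fun j => j < size p) idx -> subseq (map (nth 0 p) idx) (drop m.+1 p).
Proof.
elim: idx m => [|j idx IH] m /=; first by rewrite sub0seq.
move=> /andP[lt_mj path_idx] /andP[lt_j lt_idx].
rewrite -(cat_take_drop (j - m.+1) (drop m.+1 p)) drop_drop subnK // (drop_nth 0 lt_j).
by rewrite -[X in subseq X _]cat0s cat_subseq ?sub0seq //= eqxx IH.
Qed.

Lemma sorted_nth_subseq (p idx : seq nat) : sorted ltn idx ->
  all (fun j => j < size p) idx -> subseq (map (nth 0 p) idx) p.
Proof.
move=> sorted_idx lt_idx.
have := @path_nth_subseq (0 :: p) _ 0 (path_ltn0_map_succn sorted_idx).
by rewrite /= drop0 -map_comp all_map; apply; apply: sub_all lt_idx.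
Qed.

Lemma contains_indexP (p q : seq nat) : contains p q <->
  exists idx, [/\ size idx = size q, sorted ltn idx, all (fun j => j < size p) idx &
    forall a b, a < size q -> b < size q ->
      (nth 0 p (nth 0 idx a) < nth 0 p (nth 0 idx b)) = (nth 0 q a < nth 0 q b)].
Proof.
split.
- move=> [s [/subseq_nth_sorted [idx [sorted_idx lt_idx ->]] size_s pat]].
  rewrite size_map in size_s.
  exists idx; split=> // a b lt_a lt_b.
  by rewrite -pat ?size_s // !(nth_map 0) ?size_s.
- move=> [idx [size_idx sorted_idx lt_idx pat]].
  exists (map (nth 0 p) idx); split; rewrite ?size_map //; first exact: sorted_nth_subseq.
  by move=> a b lt_a lt_b; rewrite !(nth_map 0) ?size_idx // pat.
Qed.

Section Occurrences.
Variable p : seq nat.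
Local Notation "p_[ j ]" := (nth 0 p j) (format "p_[ j ]").

Lemma contains_321P : contains p [:: 3; 2; 1] <->
  exists x y z, [/\ x < y, y < z, z < size p, p_[y] < p_[x] & p_[z] < p_[y]].
Proof.
rewrite contains_indexP; split.
- move=> [idx [size_idx sorted_idx lt_idx pat]].
  case: idx size_idx sorted_idx lt_idx pat => [|x [|y [|z [|? ?]]]] //= _.
  move=> /and3P[lt_xy lt_yz _] /and4P[_ _ lt_z _] pat.
  by exists x, y, z; split=> //; [rewrite (pat 1 0) | rewrite (pat 2 1)].
- move=> [x [y [z [lt_xy lt_yz lt_z dyx dzy]]]].
  exists [:: x; y; z]; split => /=; rewrite ?lt_xy ?lt_yz //; first by lia.
  move=> [|[|[|a]]] [|[|[|b]]] //= _ _; lia.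
Qed.

Lemma contains_x43 q : q \in [:: [:: 1; 2; 4; 3]; [:: 2; 1; 4; 3]] -> contains p q ->
  exists x0 x1 x2 x3, [/\ x0 < x1, x1 < x2, x2 < x3, x3 < size p &
    [/\ p_[x0] < p_[x3], p_[x1] < p_[x3] & p_[x3] < p_[x2]]].
Proof.
move=> q_x43 /contains_indexP[idx [size_idx sorted_idx lt_idx pat]].
move: q_x43 size_idx pat; rewrite !inE => /orP[] /eqP-> {q}.
all: case: idx sorted_idx lt_idx => [|x0 [|x1 [|x2 [|x3 [|? ?]]]]] //=.
all: rewrite !andbT => /and3P[lt01 lt12 lt23] /and4P[_ _ _ lt3] _ pat.
all: by exists x0, x1, x2, x3; split=> //; rewrite (pat 0 3) ?(pat 1 3) ?(pat 3 2).
Qed.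

End Occurrences.

Section TwoBlocks.
Variables (s : seq nat) (i k j0 : nat).
Local Notation "s_[ j ]" := (nth 0 s j) (format "s_[ j ]").
Hypotheses (j0_le_i : j0 <= i) (i_lt_size : i < size s)
  (large_prefix : forall j, j <= i -> j != j0 -> k < s_[j])
  (small_j0 : s_[j0] <= k)
  (small_suffix : forall j, i < j -> j < size s -> s_[j] <= k)
  (incr_prefix : forall j j', j < j' -> j' <= i -> j != j0 -> j' != j0 -> s_[j] < s_[j'])
  (incr_suffix : forall j j', i < j -> j < j' -> j' < size s -> s_[j] < s_[j'])
  (j0_first_or_min : j0 = 0 \/ forall j, i < j -> j < size s -> s_[j0] < s_[j]).

Lemma two_blocks_descent x y : x < y -> y < size s -> s_[y] < s_[x] ->
  [/\ x <= i, x != j0 & i < y \/ y = j0] \/ x = j0 /\ i < y.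
Proof.
move=> lt_xy lt_y desc.
have [le_xi|lt_ix] := leqP x i; last by have := incr_suffix lt_ix lt_xy lt_y; lia.
have [le_yi|lt_iy] := leqP y i; last first.
  by case: (eqVneq x j0) => [eq_x|ne_x]; [right | left; split; [| | left]].
case: (eqVneq y j0) => [eq_y|ne_y]; first by left; split; [| apply/eqP; lia | right].
case: (eqVneq x j0) => [eq_x|ne_x].
- by have := large_prefix le_yi ne_y; have := small_j0; rewrite -eq_x; lia.
- by have := incr_prefix lt_xy le_yi ne_x ne_y; lia.
Qed.

Lemma two_blocks_avoid321 : avoids s [:: 3; 2; 1].
Proof.
move=> /contains_321P[x [y [z [lt_xy lt_yz lt_z dyx dzy]]]].
have [[le_yi ne_y _]|[eq_y lt_iz]] := two_blocks_descent lt_yz lt_z dzy.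
- by have [[_ _ [|]]|[_]] := two_blocks_descent lt_xy (ltn_trans lt_yz lt_z) dyx; lia.
- case: j0_first_or_min => [|min_j0]; first lia.
  by have := min_j0 _ lt_iz lt_z; rewrite -eq_y; lia.
Qed.

Lemma two_blocks_avoid_x43 q : q \in [:: [:: 1; 2; 4; 3]; [:: 2; 1; 4; 3]] -> avoids s q.
Proof.
move=> q_x43 /(contains_x43 q_x43)[x0 [x1 [x2 [x3 [lt01 lt12 lt23 lt3 [d03 d13 d32]]]]]].
suff [xa [le_xa ne_xa d_a3 small_x3]] :
    exists xa, [/\ xa <= i, xa != j0, s_[xa] < s_[x3] & s_[x3] <= k].
  by have := large_prefix le_xa ne_xa; lia.
have [[le_x2 ne_x2 [lt_i3|eq_x3]]|[eq_x2 lt_i3]] := two_blocks_descent lt23 lt3 d32.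
- have small3 := small_suffix lt_i3 lt3.
  case: (eqVneq x0 j0) => [eq_x0|ne_x0]; last by exists x0; split=> //; lia.
  by exists x1; split=> //; [lia | apply/eqP; lia].
- by exists x0; split=> //; [lia | apply/eqP; lia | rewrite eq_x3].
- by exists x0; split; [lia | apply/eqP; lia | | exact: small_suffix].
Qed.

Lemma two_blocks_avoids q : q \in R3 -> avoids s q.
Proof.
rewrite !inE => /orP[q_x43|/orP[q_x43|/eqP->]]; last exact: two_blocks_avoid321.
all: by apply: two_blocks_avoid_x43; rewrite !inE q_x43 ?orbT.
Qed.

End TwoBlocks.

Lemma perm_star p1 p2 i k : 0 < i -> 0 < k -> is_perm i p1 -> is_perm k p2 ->
  is_perm (i + k) (star p1 p2).
Proof.
rewrite /is_perm /star => i_gt0 k_gt0 perm1 perm2.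
have size2 : size p2 = k by rewrite (perm_size perm2) size_iota.
case: p2 perm2 size2 => [|c b] perm2 /= size2; first lia.
rewrite size2 (perm_size perm1) size_iota; set f := (fun x => _).
have map_iota : map f (iota 1 i) = c :: iota k.+1 i.-1.
  rewrite -{1}(prednK i_gt0) /= {1}/f (_ : 1 + (k - 1) == k) /=; last by apply/eqP; lia.
  rewrite (_ : k.+1 = k.-1 + 2) ?iotaDl; last lia.
  congr (_ :: _); apply/eq_in_map => x; rewrite mem_iota /f => /andP[x_ge2 _].
  by case: eqP; lia.
apply: perm_trans (perm_cat (perm_map f perm1) (perm_refl _)) _.
have iota_split : iota k.+1 i = iota k.+1 i.-1 ++ [:: k + i].
  by rewrite -{1}(prednK i_gt0) -[i.-1.+1]addn1 iotaD addSnnS prednK.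
rewrite map_iota addnC iotaD add1n iota_split.
apply: perm_trans _ (perm_cat perm2 (perm_refl _)).
by apply/permP => P; rewrite /= !count_cat /=; lia.
Qed.

Section Star.
Variables (p1 p2 : seq nat) (i k : nat).
Hypotheses (i_gt0 : 0 < i) (k_gt1 : 1 < k) (perm1 : is_perm i p1) (perm2 : is_perm k p2).
Local Notation s := (star p1 p2).
Local Notation c := (head 0 p2).
Local Notation j0 := (index 1 p1).
Local Notation "p1_[ j ]" := (nth 0 p1 j) (format "p1_[ j ]").
Local Notation "p2_[ j ]" := (nth 0 p2 j) (format "p2_[ j ]").
Local Notation "s_[ j ]" := (nth 0 s j) (format "s_[ j ]").

Let size_p1 : size p1 = i. Proof. by rewrite (perm_size perm1) size_iota. Qed.
Let size_p2 : size p2 = k. Proof. by rewrite (perm_size perm2) size_iota. Qed.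
Let uniq_p1 : uniq p1. Proof. by rewrite (perm_uniq perm1) iota_uniq. Qed.
Let uniq_p2 : uniq p2. Proof. by rewrite (perm_uniq perm2) iota_uniq. Qed.

Let mem_p1 x : (x \in p1) = (0 < x <= i).
Proof. by rewrite (perm_mem perm1) mem_iota; apply/idP/idP; lia. Qed.

Let mem_p2 x : (x \in p2) = (0 < x <= k).
Proof. by rewrite (perm_mem perm2) mem_iota; apply/idP/idP; lia. Qed.

Let nth_p1 j : j < i -> 0 < p1_[j] <= i.
Proof. by move=> lt_ji; rewrite -mem_p1 mem_nth ?size_p1. Qed.

Let nth_p2 j : j < k -> 0 < p2_[j] <= k.
Proof. by move=> lt_jk; rewrite -mem_p2 mem_nth ?size_p2. Qed.

Let head_p2 : c = p2_[0]. Proof. by case: (p2). Qed.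

Let j0_lt_i : j0 < i. Proof. by rewrite -size_p1 index_mem mem_p1. Qed.

Let nth_p1_j0 : p1_[j0] = 1. Proof. by rewrite nth_index ?mem_p1. Qed.

Let nth_p1_gt1 j : j < i -> j != j0 -> 1 < p1_[j].
Proof.
move=> lt_ji; apply: contraNT => le_1.
have eq1 : p1_[j] = 1 by have := nth_p1 lt_ji; lia.
by rewrite -eq1 index_uniq ?size_p1.
Qed.

Lemma size_star : size s = i + k.
Proof. by rewrite /star size_cat size_map /= size_behead size_p1 size_p2; lia. Qed.

Lemma nth_star_j0 : s_[j0] = c.
Proof.
rewrite /star nth_cat size_map size_p1 j0_lt_i (nth_map 0) ?size_p1 // nth_p1_j0.
by rewrite size_p2 add1n subn1 prednK ?eqxx //; lia.
Qed.

Lemma nth_star_prefix j : j < i -> 1 < p1_[j] -> s_[j] = p1_[j] + (k - 1).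
Proof.
move=> lt_ji gt1; rewrite /star nth_cat size_map size_p1 lt_ji (nth_map 0) ?size_p1 //.
by rewrite size_p2; case: eqP; lia.
Qed.

Lemma nth_star_index x : 1 < x <= i -> s_[index x p1] = x + (k - 1).
Proof.
move=> x_range; have x_p1 : x \in p1 by rewrite mem_p1; lia.
have lt_x : index x p1 < i by rewrite -size_p1 index_mem.
by rewrite nth_star_prefix //; rewrite nth_index //; lia.
Qed.

Lemma nth_star_i : s_[i] = i + k.
Proof. by rewrite /star nth_cat size_map size_p1 ltnn subnn size_p2. Qed.

Lemma nth_star_suffix j : i < j -> s_[j] = p2_[j - i].
Proof.
move=> lt_ij; rewrite /star nth_cat size_map size_p1 ltnNge (ltnW lt_ij) /=.
by case E: (j - i) => [|m]; [lia | rewrite /= nth_behead].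
Qed.

Lemma star_avoid321_head1 : avoids s [:: 3; 2; 1] -> head 0 p1 = 1 \/ c = 1.
Proof.
move=> avoid321; case: (eqVneq (head 0 p1) 1) => [|h1]; first by left.
case: (eqVneq c 1) => [|c_ne1]; first by right.
exfalso; apply/avoid321/contains_321P.
have j0_gt0 : 0 < j0.
  by rewrite lt0n; apply: contra h1 => /eqP j0_0; have := nth_p1_j0; rewrite j0_0 nth0 => ->.
have one_p2 : 1 \in p2 by rewrite mem_p2; lia.
have z_lt_k : index 1 p2 < k by rewrite -size_p2 index_mem.
have z_gt0 : 0 < index 1 p2.
  rewrite lt0n; apply: contra c_ne1 => /eqP z_0.
  by have := nth_index 0 one_p2; rewrite z_0 -head_p2 => ->.
exists 0, j0, (i + index 1 p2); rewrite size_star; split; try lia.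
- have := nth_p2 (ltnW k_gt1); have gt1 := nth_p1_gt1 i_gt0 (negbT (ltn_eqF j0_gt0)).
  by rewrite nth_star_j0 nth_star_prefix // -head_p2; lia.
- rewrite nth_star_j0 nth_star_suffix ?addKn ?nth_index //; last lia.
  by have := nth_p2 (ltnW k_gt1); rewrite -head_p2; lia.
Qed.

Lemma star_avoid321_prefix_sorted : avoids s [:: 3; 2; 1] ->
  forall a b, 2 <= a -> a < b -> b <= i -> index a p1 < index b p1.
Proof.
move=> avoid321 a b a_ge2 lt_ab le_bi; rewrite ltnNge; apply/negP => le_ba.
apply/avoid321/contains_321P.
have [a_p1 b_p1] : a \in p1 /\ b \in p1 by rewrite !mem_p1; lia.
have [lt_a lt_b] : index a p1 < i /\ index b p1 < i by rewrite -size_p1 !index_mem.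
have ne_ab : index b p1 != index a p1.
  by apply: contraTneq lt_ab => eq_ab; rewrite -(nth_index 0 a_p1) -eq_ab nth_index ?ltnn.
exists (index b p1), (index a p1), i.+1; rewrite size_star; split; try lia.
- by rewrite !nth_star_index //; lia.
- have := nth_p2 k_gt1.
  by rewrite nth_star_suffix // subSnn nth_star_index //; lia.
Qed.

Lemma star_avoid321_suffix_sorted : avoids s [:: 3; 2; 1] -> sorted ltn (behead p2).
Proof.
move=> avoid321; apply/(sortedP 0) => m; rewrite size_behead size_p2 !nth_behead => lt_m.
have {}lt_m : m.+2 < k by lia.
suff : p2_[m.+1] < p2_[m.+2] by [].
rewrite ltnNge; apply/negP => le_m; apply/avoid321/contains_321P.
have ne_m : p2_[m.+2] != p2_[m.+1] by rewrite nth_uniq ?size_p2 //; lia.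
exists i, (i + m.+1), (i + m.+2); rewrite size_star; split; try lia.
- by have := nth_p2 (ltnW lt_m); rewrite nth_star_i nth_star_suffix ?addKn //; lia.
- by rewrite !nth_star_suffix ?addKn //; lia.
Qed.

Lemma star_avoids : head 0 p1 = 1 \/ c = 1 ->
  (forall a b, 2 <= a -> a < b -> b <= i -> index a p1 < index b p1) ->
  sorted ltn (behead p2) -> forall q, q \in R3 -> avoids s q.
Proof.
move=> head1 prefix_sorted suffix_sorted.
have size_s : size s = i + k by exact: size_star.
have p1_incr j j' : j < j' < i -> j != j0 -> j' != j0 -> p1_[j] < p1_[j'].
  move=> /andP[lt_jj' lt_j'i] ne_j ne_j'; rewrite ltnNge; apply/negP => le_j'j.
  have lt_ji := ltn_trans lt_jj' lt_j'i.
  have ne : p1_[j'] != p1_[j] by rewrite nth_uniq ?size_p1 //; lia.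
  have := nth_p1 lt_ji; have := prefix_sorted _ p1_[j] (nth_p1_gt1 lt_j'i ne_j').
  by rewrite !index_uniq ?size_p1 //; lia.
apply: (two_blocks_avoids (i := i) (k := k) (j0 := j0)); rewrite ?size_s.
- exact: ltnW.
- lia.
- move=> j le_ji ne_j; have [lt_ji|->] : j < i \/ j = i by lia.
  + by have gt1 := nth_p1_gt1 lt_ji ne_j; rewrite nth_star_prefix //; lia.
  + by rewrite nth_star_i; lia.
- by have := nth_p2 (ltnW k_gt1); rewrite nth_star_j0 -head_p2; lia.
- move=> j lt_ij lt_j; have lt_ji : j - i < k by lia.
  by have := nth_p2 lt_ji; rewrite nth_star_suffix //; lia.
- move=> j j' lt_jj' le_j'i ne_j ne_j'.
  have gt1 := nth_p1_gt1 (leq_trans lt_jj' le_j'i) ne_j.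
  have [lt_j'i|->] : j' < i \/ j' = i by lia.
  + have gt1' := nth_p1_gt1 lt_j'i ne_j'.
    have := p1_incr j j'; rewrite lt_jj' lt_j'i => /(_ isT ne_j ne_j').
    by rewrite !nth_star_prefix //; lia.
  + by have := nth_p1 (leq_trans lt_jj' le_j'i); rewrite nth_star_i nth_star_prefix //; lia.
- move=> j j' lt_ij lt_jj' lt_j'.
  rewrite !nth_star_suffix ?(ltn_trans lt_ij lt_jj') //.
  have := sorted_ltn_nth ltn_trans 0 suffix_sorted (j - i).-1 (j' - i).-1.
  by rewrite !inE size_behead !nth_behead !prednK ?subn_gt0 //; lia.
- case: head1 => [head1|c1]; [left | right].
  + by rewrite -head1 -nth0 index_uniq ?size_p1.
  + move=> j lt_ij lt_j; have lt_ji : j - i < k by lia.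
    have ne : p2_[j - i] != p2_[0] by rewrite nth_uniq ?size_p2 //; lia.
    have := nth_p2 lt_ji; rewrite nth_star_j0 nth_star_suffix // -head_p2 c1 in ne *; lia.
Qed.

End Star.

Theorem mainTheorem13 (n i : nat) (p1 p2 : seq nat) :
  1 <= i -> i <= n - 2 ->
  inS i R3 p1 -> inS (n - i) R3 p2 ->
  (inS n R3 (star p1 p2) <->
     [/\ head 0 p1 = 1 \/ head 0 p2 = 1,
         (forall a b, 2 <= a -> a < b -> b <= i -> index a p1 < index b p1) &
         sorted ltn (behead p2)]).
Proof.
move=> i_gt0 le_in [perm1 _] [perm2 _].
have k_gt1 : 1 < n - i by lia.
have -> : n = i + (n - i) by lia.
split=> [[_ avoid] | [head1 prefix_sorted suffix_sorted]].
- have avoid321 : avoids (star p1 p2) [:: 3; 2; 1] by apply: avoid; rewrite !inE eqxx !orbT.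
  split; [exact: (star_avoid321_head1 i_gt0 k_gt1 perm1 perm2)
         | exact: (star_avoid321_prefix_sorted i_gt0 k_gt1 perm1 perm2)
         | exact: (star_avoid321_suffix_sorted i_gt0 k_gt1 perm1 perm2)].
- split; first by apply: perm_star; lia.
  exact: (star_avoids i_gt0 k_gt1 perm1 perm2).
Qed.
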